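(* Let $E=\mathbb{Q}(i,\sqrt5)$, let $\tau=(1+\sqrt5)/2$, and let $\sigma$ be the automorphism of $E$ with $\sigma(i)=i$ and $\sigma(\sqrt5)=-\sqrt5$. For a real number $N\ge 1$ let $\mathbf{L}(N)$ be the set of numbers $x=(a+bi)+(c+di)\tau\in E$ with $a,b,c,d\in\mathbb{Z}$ and $|a|,|b|,|c|,|d|\le N$. For $x_1,x_2\in E$ put $$X(x_1,x_2)=\begin{pmatrix} x_1 & \sigma(x_1)\\ i\,x_2 & \sigma(x_2)\end{pmatrix},\qquad D(N_1,N_2)=\min_{x_1\in\mathbf{L}(N_1)\setminus\{0\},\ x_2\in\mathbf{L}(N_2)\setminus\{0\}}\left|\det X(x_1,x_2)\right|.$$ Then there exists a constant $K>0$ such that for all $N\ge1$, $$D(N^{3/5},N^{2/5})\le\frac{K}{N}.$$ In particular, there exist constants $C_\ell,C_u>0$ such that for all sufficiently large $N$, $$\frac{C_\ell}{N^2}\le D(N,N)\le\frac{C_u}{N^{5/3}},$$ i.e. the decay exponent of this code lies between $5/3$ and $2$.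
   Context: This is the two-user single-antenna Badr–Belfiore multiuser MIMO code; $\det X(x_1,x_2)\neq0$ whenever $x_1,x_2\neq0$. A code is said to decay with exponent at least $\delta_1$ if $D(N,N)\le C_uN^{-\delta_1}$ and with exponent at most $\delta_2$ if $D(N,N)\ge C_\ell N^{-\delta_2}$, for positive constants $C_u,C_\ell$. *)

From Stdlib Require Import Reals ZArith.
From Coquelicot Require Import Coquelicot.
Open Scope R_scope.

Definition tau : C := RtoC ((1 + sqrt 5) / 2).
Definition tau_conj : C := RtoC ((1 - sqrt 5) / 2).

Definition elemE (a b c d : Z) : C :=
  Cplus (Cplus (RtoC (IZR a)) (Cmult (RtoC (IZR b)) Ci))
        (Cmult (Cplus (RtoC (IZR c)) (Cmult (RtoC (IZR d)) Ci)) tau).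

(* sigma(x) where sigma fixes i and sends sqrt 5 to -sqrt 5 (so tau to tau_conj);
   sigma is Q-linear, so sigma((a+bi)+(c+di)tau) = (a+bi)+(c+di)sigma(tau). *)
Definition sigmaE (a b c d : Z) : C :=
  Cplus (Cplus (RtoC (IZR a)) (Cmult (RtoC (IZR b)) Ci))
        (Cmult (Cplus (RtoC (IZR c)) (Cmult (RtoC (IZR d)) Ci)) tau_conj).

Definition boxN (N : R) (a b c d : Z) : Prop :=
  Rabs (IZR a) <= N /\ Rabs (IZR b) <= N /\ Rabs (IZR c) <= N /\ Rabs (IZR d) <= N.

Definition detX (x1 sx1 x2 sx2 : C) : C :=
  Cminus (Cmult x1 sx2) (Cmult sx1 (Cmult Ci x2)).

Definition det_values (N1 N2 : R) (r : R) : Prop :=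
  exists a1 b1 c1 d1 a2 b2 c2 d2 : Z,
    boxN N1 a1 b1 c1 d1 /\ boxN N2 a2 b2 c2 d2 /\
    elemE a1 b1 c1 d1 <> RtoC 0 /\ elemE a2 b2 c2 d2 <> RtoC 0 /\
    r = Cmod (detX (elemE a1 b1 c1 d1) (sigmaE a1 b1 c1 d1)
                   (elemE a2 b2 c2 d2) (sigmaE a2 b2 c2 d2)).

(* D(N1,N2): the minimum (= infimum, the set being finite and nonempty for
   N1,N2 >= 1) of det_values. *)
Definition Dmin (N1 N2 : R) : R := real (Glb_Rbar (det_values N1 N2)).

(* Lower bound: for nonzero x1, x2 in Z[i, tau] the determinant d = det X(x1, x2) is a
   nonzero element of Z[i, tau], so its norm d sigma(d) is a nonzero Gaussian integer and
   |d| >= 1 / |sigma(d)| >= 1 / (72 N^2).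
   Upper bound: with s = tau^2j, the elements x1 = s^-3 + tau^-1 s - i (tau^-1 s^-1 + s^3)
   and x2 = s^2 - s^-2 - i tau have both real embeddings of size O(tau^6j), resp. O(tau^4j),
   hence coordinates of that size, while the large terms of det X(x1, x2) cancel down to
   2 tau^-10j.  Taking tau^10j of order N gives D(N^3/5, N^2/5) = O(1/N), and
   D(N, N) <= D(M^3/5, M^2/5) for M = N^5/3. *)

From Stdlib Require Import Reals ZArith Lra Lia Psatz Nsatz Znumtheory.
From Coquelicot Require Import Coquelicot.
Open Scope R_scope.

Definition phi : R := (1 + sqrt 5) / 2.
Definition psi : R := (1 - sqrt 5) / 2.

Lemma sqrt5_bounds : 2 < sqrt 5 < 3.
Proof.
  split.
  - rewrite <- (sqrt_square 2) by lra. apply sqrt_lt_1; lra.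
  - rewrite <- (sqrt_square 3) by lra. apply sqrt_lt_1; lra.
Qed.

Lemma phi_golden : phi * phi = phi + 1.
Proof.
  unfold phi. pose proof (sqrt_sqrt 5 ltac:(lra)). nra.
Qed.

Lemma psi_eq : psi = 1 - phi.
Proof. unfold psi, phi. field. Qed.

Lemma phi_eq : phi = 1 - psi.
Proof. rewrite psi_eq. ring. Qed.

Lemma golden_one_sub t : t * t = t + 1 -> (1 - t) * (1 - t) = (1 - t) + 1.
Proof. intro Ht. nra. Qed.

Lemma psi_golden : psi * psi = psi + 1.
Proof. rewrite psi_eq. apply golden_one_sub, phi_golden. Qed.

Lemma phi_bounds : 3/2 < phi < 2.
Proof. unfold phi. pose proof sqrt5_bounds. lra. Qed.

Lemma phi_mul_pred : phi * (phi - 1) = 1.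
Proof. pose proof phi_golden. lra. Qed.

(* [mkZiTau a b c d] stands for (a + b i) + (c + d i) tau, with tau^2 = tau + 1;
   [ev t] evaluates it at a root [t] of that equation. *)
Record ZiTau := mkZiTau { za : Z; zb : Z; zc : Z; zd : Z }.

Definition ev (t : R) (x : ZiTau) : C :=
  (IZR (za x) + IZR (zc x) * t, IZR (zb x) + IZR (zd x) * t).

Definition zadd (x y : ZiTau) : ZiTau :=
  mkZiTau (za x + za y) (zb x + zb y) (zc x + zc y) (zd x + zd y).
Definition zopp (x : ZiTau) : ZiTau := mkZiTau (- za x) (- zb x) (- zc x) (- zd x).
Definition zsub (x y : ZiTau) : ZiTau := zadd x (zopp y).
Definition zmul (x y : ZiTau) : ZiTau :=
  let '(mkZiTau a b c d) := x in let '(mkZiTau e f g h) := y in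
  mkZiTau (a*e - b*f + c*g - d*h) (a*f + b*e + c*h + d*g)
          (a*g - b*h + c*e - d*f + c*g - d*h) (a*h + b*g + c*f + d*e + c*h + d*g).
Definition zone : ZiTau := mkZiTau 1 0 0 0.
Definition zi : ZiTau := mkZiTau 0 1 0 0.
Definition ztau : ZiTau := mkZiTau 0 0 1 0.
Definition ztau_inv : ZiTau := mkZiTau (-1) 0 1 0.
Definition zpow (x : ZiTau) (n : nat) : ZiTau := Nat.iter n (zmul x) zone.
(* The automorphism sqrt 5 |-> - sqrt 5, i.e. tau |-> 1 - tau. *)
Definition zconj (x : ZiTau) : ZiTau :=
  mkZiTau (za x + zc x) (zb x + zd x) (- zc x) (- zd x).
Definition zdet (x1 x2 : ZiTau) : ZiTau :=
  zsub (zmul x1 (zconj x2)) (zmul zi (zmul (zconj x1) x2)).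

Definition inbox (N : R) (x : ZiTau) : Prop := boxN N (za x) (zb x) (zc x) (zd x).

Ltac push_IZR := repeat rewrite ?plus_IZR, ?minus_IZR, ?mult_IZR, ?opp_IZR.

Lemma ev_add t x y : ev t (zadd x y) = Cplus (ev t x) (ev t y).
Proof. unfold ev, zadd, Cplus; cbn [fst snd za zb zc zd]. push_IZR. f_equal; ring. Qed.

Lemma ev_opp t x : ev t (zopp x) = Copp (ev t x).
Proof. unfold ev, zopp, Copp; cbn [fst snd za zb zc zd]. push_IZR. f_equal; ring. Qed.

Lemma ev_sub t x y : ev t (zsub x y) = Cminus (ev t x) (ev t y).
Proof. unfold zsub, Cminus. rewrite ev_add, ev_opp. reflexivity. Qed.

Lemma ev_one t : ev t zone = RtoC 1.
Proof. unfold ev, RtoC; cbn. f_equal; ring. Qed.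

Lemma ev_i t : ev t zi = Ci.
Proof. unfold ev, Ci; cbn. f_equal; ring. Qed.

Lemma ev_tau t : ev t ztau = RtoC t.
Proof. unfold ev, RtoC; cbn. f_equal; ring. Qed.

Lemma ev_tau_inv t : ev t ztau_inv = RtoC (t - 1).
Proof. unfold ev, RtoC; cbn. f_equal; ring. Qed.

Lemma ev_conj t x : ev t (zconj x) = ev (1 - t) x.
Proof. unfold ev, zconj; cbn [fst snd za zb zc zd]. push_IZR. f_equal; ring. Qed.

Section GoldenEvaluation.

Variable t : R.
Hypothesis t_golden : t * t = t + 1.

Lemma ev_mul x y : ev t (zmul x y) = Cmult (ev t x) (ev t y).
Proof.
  destruct x as [a b c d], y as [e f g h].
  unfold ev, zmul, Cmult; cbn [fst snd za zb zc zd]. push_IZR. f_equal; nsatz.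
Qed.

Lemma ev_pow x p n : ev t x = RtoC p -> ev t (zpow x n) = RtoC (p ^ n).
Proof.
  intro Hx. induction n as [|n IH]; cbn [zpow Nat.iter].
  - apply ev_one.
  - change (ev t (zmul x (zpow x n)) = RtoC (p * p ^ n)).
    rewrite ev_mul, Hx, IH. unfold Cmult, RtoC; cbn. f_equal; ring.
Qed.

Lemma ev_zdet x1 x2 :
  ev t (zdet x1 x2) = detX (ev t x1) (ev (1 - t) x1) (ev t x2) (ev (1 - t) x2).
Proof.
  unfold zdet, detX. rewrite ev_sub, !ev_mul, !ev_conj, ev_i. ring.
Qed.

End GoldenEvaluation.

Lemma prime_5 : prime 5.
Proof.
  apply prime_intro; [lia|]. intros n Hn. apply Zgcd_1_rel_prime.
  assert (Hn' : (n = 1 \/ n = 2 \/ n = 3 \/ n = 4)%Z) by lia.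
  destruct Hn' as [E|[E|[E|E]]]; subst n; reflexivity.
Qed.

Lemma Z_sqr_eq_5_sqr (m c : Z) : (m * m = 5 * (c * c))%Z -> c = 0%Z.
Proof.
  remember (Z.abs_nat c) as n eqn:Hn. revert m c Hn.
  induction n as [n IH] using lt_wf_ind. intros m c -> E.
  destruct (prime_mult 5 prime_5 m m) as [[k ->]|[k ->]];
    try (exists (c * c)%Z; lia).
  all: assert (Hk : (c * c = 5 * (k * k))%Z) by lia.
  all: destruct (Z.eq_dec k 0) as [->|Hk0]; [nia|].
  all: exfalso; apply Hk0, (IH (Z.abs_nat k) ltac:(nia) c k eq_refl Hk).
Qed.

Lemma golden_lin_indep t a c :
  t * t = t + 1 -> IZR a + IZR c * t = 0 -> a = 0%Z /\ c = 0%Z.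
Proof.
  intros Ht H.
  assert (E : IZR ((2 * a + c) * (2 * a + c)) = IZR (5 * (c * c))).
  { push_IZR. nsatz. }
  apply eq_IZR, Z_sqr_eq_5_sqr in E. subst c.
  split; [apply eq_IZR; lra | reflexivity].
Qed.

Lemma ev_eq0_transfer t s x : t * t = t + 1 -> ev t x = RtoC 0 -> ev s x = RtoC 0.
Proof.
  intros Ht H. unfold ev, RtoC in *. injection H as H1 H2.
  apply (golden_lin_indep t) in H1 as [-> ->]; [|exact Ht].
  apply (golden_lin_indep t) in H2 as [-> ->]; [|exact Ht].
  f_equal; ring.
Qed.

Lemma ev_mul_ev_conj_Gaussian t x : t * t = t + 1 ->
  exists g1 g2 : Z, Cmult (ev t x) (ev (1 - t) x) = (IZR g1, IZR g2).
Proof.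
  intro Ht. destruct x as [a b c d].
  exists (a*a - b*b + a*c - b*d - c*c + d*d)%Z, (2*a*b + a*d + b*c - 2*c*d)%Z.
  unfold ev, Cmult; cbn [fst snd za zb zc zd]. push_IZR. f_equal; nsatz.
Qed.

Lemma Cmod_Gaussian_ge1 (g1 g2 : Z) : (IZR g1, IZR g2) <> RtoC 0 -> 1 <= Cmod (IZR g1, IZR g2).
Proof.
  intro Hg. unfold Cmod; cbn [fst snd]. rewrite <- sqrt_1. apply sqrt_le_1_alt.
  assert (Hsq : (1 <= g1 * g1 + g2 * g2)%Z).
  { destruct (Z.eq_dec g1 0) as [->|]; [destruct (Z.eq_dec g2 0) as [->|]|].
    - exfalso. apply Hg. reflexivity.
    - nia.
    - nia. }
  apply IZR_le in Hsq. rewrite plus_IZR, !mult_IZR in Hsq. nra.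
Qed.

Lemma Cmod_norm_ge1 t x : t * t = t + 1 -> ev t x <> RtoC 0 ->
  1 <= Cmod (ev t x) * Cmod (ev (1 - t) x).
Proof.
  intros Ht Hx. rewrite <- Cmod_mult.
  destruct (ev_mul_ev_conj_Gaussian t x Ht) as (g1 & g2 & E). rewrite E.
  apply Cmod_Gaussian_ge1. rewrite <- E. intro H0.
  apply (f_equal Cmod) in H0. rewrite Cmod_mult, Cmod_0 in H0.
  apply Rmult_integral in H0 as [H0|H0]; apply Cmod_eq_0 in H0.
  - exact (Hx H0).
  - apply Hx, (ev_eq0_transfer (1 - t)); [apply golden_one_sub|]; assumption.
Qed.

Lemma Cmod_le_Rabs_sum (p q : R) : Cmod (p, q) <= Rabs p + Rabs q.
Proof.
  unfold Cmod; cbn [fst snd].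
  pose proof (Rabs_pos p). pose proof (Rabs_pos q).
  rewrite <- (sqrt_pow2 (Rabs p + Rabs q)) by lra.
  apply sqrt_le_1_alt. rewrite <- (pow2_abs p), <- (pow2_abs q). nra.
Qed.

Lemma Cmod_ev_le t N x : Rabs t <= 2 -> inbox N x -> Cmod (ev t x) <= 6 * N.
Proof.
  intros Ht (Ha & Hb & Hc & Hd). unfold ev.
  eapply Rle_trans; [apply Cmod_le_Rabs_sum|].
  pose proof (Rabs_triang (IZR (za x)) (IZR (zc x) * t)).
  pose proof (Rabs_triang (IZR (zb x)) (IZR (zd x) * t)).
  rewrite !Rabs_mult in *.
  pose proof (Rabs_pos (IZR (zc x))). pose proof (Rabs_pos (IZR (zd x))).
  nra.
Qed.

Lemma Cmod_detX_le u1 v1 u2 v2 :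
  Cmod (detX u1 v1 u2 v2) <= Cmod u1 * Cmod v2 + Cmod v1 * Cmod u2.
Proof.
  unfold detX, Cminus. eapply Rle_trans; [apply Cmod_triangle|].
  rewrite Cmod_opp, !Cmod_mult, Cmod_Ci. lra.
Qed.

(* x1 sigma(x2) = i sigma(x1) x2 = i^2 x1 sigma(x2) *)
Lemma detX_conj_eq0 u1 v1 u2 v2 :
  detX u1 v1 u2 v2 = RtoC 0 -> detX v1 u1 v2 u2 = RtoC 0 -> Cmult u1 v2 = RtoC 0.
Proof.
  destruct u1 as [p1 p2], v1 as [q1 q2], u2 as [r1 r2], v2 as [s1 s2].
  unfold detX, Cminus, Cplus, Copp, Cmult, Ci, RtoC; cbn [fst snd].
  intros H1 H2. injection H1 as H1 H1'. injection H2 as H2 H2'.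
  f_equal; lra.
Qed.

Lemma ev_zdet_neq0 x1 x2 : ev phi x1 <> RtoC 0 -> ev phi x2 <> RtoC 0 ->
  ev phi (zdet x1 x2) <> RtoC 0.
Proof.
  intros H1 H2 HD.
  assert (HD' : ev psi (zdet x1 x2) = RtoC 0)
    by exact (ev_eq0_transfer phi psi _ phi_golden HD).
  rewrite ev_zdet in HD by exact phi_golden.
  rewrite ev_zdet, <- phi_eq in HD' by exact psi_golden.
  rewrite <- psi_eq in HD.
  pose proof (detX_conj_eq0 _ _ _ _ HD HD') as P.
  apply (f_equal Cmod) in P. rewrite Cmod_mult, Cmod_0 in P.
  apply Rmult_integral in P as [P|P]; apply Cmod_eq_0 in P.
  - exact (H1 P).
  - exact (H2 (ev_eq0_transfer psi phi _ psi_golden P)).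
Qed.

Lemma Cmod_ev_zdet_ge N x1 x2 : 0 < N -> inbox N x1 -> inbox N x2 ->
  ev phi x1 <> RtoC 0 -> ev phi x2 <> RtoC 0 ->
  1 / (72 * N ^ 2) <= Cmod (ev phi (zdet x1 x2)).
Proof.
  intros HN B1 B2 H1 H2.
  pose proof (Cmod_norm_ge1 phi (zdet x1 x2) phi_golden (ev_zdet_neq0 x1 x2 H1 H2)) as Hnorm.
  rewrite <- psi_eq in Hnorm.
  assert (Hconj : Cmod (ev psi (zdet x1 x2)) <= 72 * N ^ 2).
  { rewrite ev_zdet, <- phi_eq by exact psi_golden.
    eapply Rle_trans; [apply Cmod_detX_le|].
    assert (Tphi : Rabs phi <= 2) by (pose proof phi_bounds; apply Rabs_le; lra).
    assert (Tpsi : Rabs psi <= 2) by (rewrite psi_eq; pose proof phi_bounds; apply Rabs_le; lra).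
    pose proof (Cmod_ev_le _ _ _ Tphi B1). pose proof (Cmod_ev_le _ _ _ Tpsi B1).
    pose proof (Cmod_ev_le _ _ _ Tphi B2). pose proof (Cmod_ev_le _ _ _ Tpsi B2).
    pose proof (Cmod_ge_0 (ev phi x1)). pose proof (Cmod_ge_0 (ev psi x1)).
    pose proof (Cmod_ge_0 (ev phi x2)). pose proof (Cmod_ge_0 (ev psi x2)).
    nra. }
  pose proof (Cmod_ge_0 (ev phi (zdet x1 x2))).
  apply (Rmult_le_reg_r (72 * N ^ 2)); [nra|].
  unfold Rdiv. rewrite Rmult_1_l, Rinv_l by nra. nra.
Qed.

Lemma coords_le_of_embeddings a c M :
  Rabs (IZR a + IZR c * phi) <= M -> Rabs (IZR a + IZR c * psi) <= M ->
  Rabs (IZR a) <= M /\ Rabs (IZR c) <= M.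
Proof.
  set (u := IZR a + IZR c * phi). set (v := IZR a + IZR c * psi). intros Hu Hv.
  pose proof phi_bounds. pose proof (Rabs_pos u).
  assert (Ea : IZR a * (phi - psi) = phi * v - psi * u) by (unfold u, v; ring).
  assert (Ec : IZR c * (phi - psi) = u - v) by (unfold u, v; ring).
  assert (Hd : 2 < phi - psi) by (rewrite psi_eq; lra).
  split; apply (Rmult_le_reg_r (phi - psi)); try lra;
    rewrite <- (Rabs_pos_eq (phi - psi)) at 1 by lra; rewrite <- Rabs_mult.
  - rewrite Ea, psi_eq. unfold Rminus. eapply Rle_trans; [apply Rabs_triang|].
    rewrite Rabs_Ropp, !Rabs_mult, (Rabs_pos_eq phi), (Rabs_left (1 + - phi)) by lra.
    rewrite psi_eq in Hd. nra.
  - rewrite Ec. unfold Rminus. eapply Rle_trans; [apply Rabs_triang|].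
    rewrite Rabs_Ropp. nra.
Qed.

Lemma inbox_of_embeddings x M :
  Rabs (fst (ev phi x)) <= M -> Rabs (fst (ev psi x)) <= M ->
  Rabs (snd (ev phi x)) <= M -> Rabs (snd (ev psi x)) <= M -> inbox M x.
Proof.
  unfold ev; cbn [fst snd]. intros H1 H2 H3 H4.
  destruct (coords_le_of_embeddings _ _ _ H1 H2).
  destruct (coords_le_of_embeddings _ _ _ H3 H4).
  unfold inbox, boxN. tauto.
Qed.

Definition witness1 (s s' : ZiTau) : ZiTau :=
  zsub (zadd (zpow s' 3) (zmul ztau_inv s))
       (zmul zi (zadd (zmul ztau_inv s') (zpow s 3))).
Definition witness2 (s s' : ZiTau) : ZiTau :=
  zsub (zsub (zpow s 2) (zpow s' 2)) (zmul zi ztau).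

Section WitnessEvaluation.

Variables (t p q : R) (s s' : ZiTau).
Hypotheses (t_golden : t * t = t + 1) (ev_s : ev t s = RtoC p) (ev_s' : ev t s' = RtoC q).

Lemma ev_witness1 : ev t (witness1 s s') = (q ^ 3 + (t - 1) * p, - ((t - 1) * q + p ^ 3)).
Proof.
  unfold witness1.
  rewrite ev_sub, (ev_mul t t_golden zi), !ev_add, !(ev_pow t t_golden _ _ _ ev_s),
    !(ev_pow t t_golden _ _ _ ev_s'), !(ev_mul t t_golden ztau_inv), ev_tau_inv, ev_s, ev_s', ev_i.
  unfold Cminus, Cplus, Copp, Cmult, Ci, RtoC; cbn [fst snd]. f_equal; ring.
Qed.

Lemma ev_witness2 : ev t (witness2 s s') = (p ^ 2 - q ^ 2, - t).
Proof.
  unfold witness2.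
  rewrite !ev_sub, !(ev_pow t t_golden _ _ _ ev_s), !(ev_pow t t_golden _ _ _ ev_s'),
    (ev_mul t t_golden), ev_tau, ev_i.
  unfold Cminus, Cplus, Copp, Cmult, Ci, RtoC; cbn [fst snd]. f_equal; ring.
Qed.

End WitnessEvaluation.

Lemma ev_zdet_witness p q s s' :
  ev phi s = RtoC p -> ev phi s' = RtoC q -> ev psi s = RtoC q -> ev psi s' = RtoC p ->
  p * q = 1 -> ev phi (zdet (witness1 s s') (witness2 s s')) = RtoC (2 * q ^ 5).
Proof.
  intros Hs Hs' Cs Cs' Hpq.
  rewrite (ev_zdet _ phi_golden), <- psi_eq,
    (ev_witness1 phi p q), (ev_witness2 phi p q), (ev_witness1 psi q p), (ev_witness2 psi q p);
    try assumption; try exact phi_golden; try exact psi_golden.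
  rewrite psi_eq. unfold detX, Cminus, Cplus, Copp, Cmult, Ci, RtoC; cbn [fst snd].
  assert (Zpq : p * q - 1 = 0) by lra.
  assert (Zphi : phi * phi - phi - 1 = 0) by (pose proof phi_golden; lra).
  f_equal; apply Rminus_diag_uniq.
  - transitivity ((p * q - 1) * (- (2 * q * (p * q + 1)) - q) + 2 * q * (phi * phi - phi - 1));
      [ring | rewrite Zpq, Zphi; ring].
  - transitivity ((2 * phi - 1) * p * (p * q - 1)); [ring | rewrite Zpq; ring].
Qed.

Lemma ev_tau_even_pows j :
  ev phi (zpow ztau (2 * j)) = RtoC (phi ^ (2 * j)) /\
  ev psi (zpow ztau (2 * j)) = RtoC ((phi - 1) ^ (2 * j)) /\
  ev phi (zpow ztau_inv (2 * j)) = RtoC ((phi - 1) ^ (2 * j)) /\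
  ev psi (zpow ztau_inv (2 * j)) = RtoC (phi ^ (2 * j)).
Proof.
  assert (Hsq : forall x y, x ^ 2 = y ^ 2 -> x ^ (2 * j) = y ^ (2 * j))
    by (intros x y E; rewrite !pow_mult, E; reflexivity).
  repeat split.
  - rewrite (ev_pow _ phi_golden _ _ _ (ev_tau _)). reflexivity.
  - rewrite (ev_pow _ psi_golden _ _ _ (ev_tau _)), psi_eq, (Hsq _ (phi - 1)) by ring.
    reflexivity.
  - rewrite (ev_pow _ phi_golden _ _ _ (ev_tau_inv _)). reflexivity.
  - rewrite (ev_pow _ psi_golden _ _ _ (ev_tau_inv _)), psi_eq, (Hsq _ phi) by ring.
    reflexivity.
Qed.

Lemma le_Rpower_of_pow_le x N (n k : nat) : 0 < x -> 0 < N -> (0 < n)%nat ->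
  x ^ n <= N ^ k -> x <= Rpower N (INR k / INR n).
Proof.
  intros Hx HN Hn H.
  assert (Hn' : 0 < INR n) by (apply lt_0_INR; exact Hn).
  rewrite <- (Rpower_1 x Hx), <- (Rinv_r (INR n)) by lra.
  unfold Rdiv. rewrite <- !Rpower_mult, !Rpower_pow by assumption.
  apply Rle_Rpower_l; [left; apply Rinv_0_lt_compat; exact Hn' |].
  split; [apply pow_lt|]; assumption.
Qed.

Lemma one_le_Rpower N e : 1 <= N -> 0 <= e -> 1 <= Rpower N e.
Proof. intros HN He. rewrite <- (Rpower_O N) by lra. apply Rle_Rpower; assumption. Qed.

Lemma inbox_le M M' x : M <= M' -> inbox M x -> inbox M' x.
Proof. unfold inbox, boxN. intros HM. lra. Qed.

Section WitnessBounds.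

Variables (p q : R) (s s' : ZiTau).
Hypotheses (ev_phi_s : ev phi s = RtoC p) (ev_phi_s' : ev phi s' = RtoC q)
  (ev_psi_s : ev psi s = RtoC q) (ev_psi_s' : ev psi s' = RtoC p)
  (p_ge1 : 1 <= p) (pq1 : p * q = 1).

Lemma inbox_witness :
  inbox (3 * p ^ 3) (witness1 s s') /\ inbox (2 * p ^ 2) (witness2 s s').
Proof.
  assert (Hq : 0 < q <= 1) by nra.
  assert (p2 : p <= p ^ 2) by nra. assert (p3 : p ^ 2 <= p ^ 3) by nra.
  assert (q2 : 0 < q ^ 2 <= q) by (split; nra). assert (q3 : 0 < q ^ 3 <= q ^ 2) by (split; nra).
  pose proof phi_bounds.
  split; apply inbox_of_embeddings;
    rewrite ?(ev_witness1 phi p q), ?(ev_witness1 psi q p),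
      ?(ev_witness2 phi p q), ?(ev_witness2 psi q p);
    try assumption; try exact phi_golden; try exact psi_golden;
    cbn [fst snd]; rewrite ?psi_eq; apply Rabs_le; nra.
Qed.

Lemma ev_witness_neq0 :
  ev phi (witness1 s s') <> RtoC 0 /\ ev phi (witness2 s s') <> RtoC 0.
Proof.
  assert (Hq : 0 < q) by nra. pose proof phi_bounds.
  rewrite (ev_witness1 phi p q), (ev_witness2 phi p q) by assumption || exact phi_golden.
  unfold RtoC. split; intro E; injection E; nra.
Qed.

Lemma inbox_witness_Rpower N : 243 * p ^ 5 <= N ->
  inbox (Rpower N (3/5)) (witness1 s s') /\ inbox (Rpower N (2/5)) (witness2 s s').
Proof.
  intro HN. destruct inbox_witness as [B1 B2].
  assert (HP : 1 <= p ^ 5) by (apply pow_R1_Rle; lra).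
  assert (HN3 : (243 * p ^ 5) ^ 3 <= N ^ 3) by (apply pow_incr; lra).
  assert (HN2 : (243 * p ^ 5) ^ 2 <= N ^ 2) by (apply pow_incr; lra).
  pose proof (pow_lt p 2 ltac:(lra)). pose proof (pow_lt p 3 ltac:(lra)).
  replace (3/5) with (INR 3 / INR 5) by (simpl; lra).
  replace (2/5) with (INR 2 / INR 5) by (simpl; lra).
  split.
  - apply (inbox_le (3 * p ^ 3)); [|exact B1].
    apply le_Rpower_of_pow_le; [lra | lra | lia |].
    replace ((3 * p ^ 3) ^ 5) with (243 * (p ^ 5) ^ 3) by ring. nra.
  - apply (inbox_le (2 * p ^ 2)); [|exact B2].
    apply le_Rpower_of_pow_le; [lra | lra | lia |].
    replace ((2 * p ^ 2) ^ 5) with (32 * (p ^ 5) ^ 2) by ring. nra.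
Qed.

End WitnessBounds.

Lemma exists_pow_bracket r X : 1 < r -> 1 <= X -> exists j, r ^ j <= X < r ^ S j.
Proof.
  intros Hr HX.
  destruct (Pow_x_infinity r ltac:(rewrite Rabs_pos_eq; lra) (X + 1)) as [n Hn].
  specialize (Hn n (Nat.le_refl _)).
  rewrite Rabs_pos_eq in Hn by (apply pow_le; lra).
  assert (Hlt : X < r ^ n) by lra. clear Hn.
  induction n as [|n IH].
  - simpl in Hlt. lra.
  - destruct (Rlt_le_dec X (r ^ n)) as [L|L]; [exact (IH L)|]. exists n. exact (conj L Hlt).
Qed.

(* The scale j = 0 covers N < 243, where the bounds of [inbox_witness] are too weak. *)
Lemma exists_witness_scale N : 1 <= N -> exists j,
  (j = 0%nat \/ 243 * (phi ^ (2 * j)) ^ 5 <= N) /\ N < 243 * phi ^ 10 * (phi ^ (2 * j)) ^ 5.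
Proof.
  intro HN. pose proof phi_bounds.
  assert (Hphi10 : 1 < phi ^ 10).
  { pose proof (Rlt_pow phi 0 10 ltac:(lra) ltac:(lia)) as P. rewrite pow_O in P. exact P. }
  assert (Hpow : forall j, (phi ^ (2 * j)) ^ 5 = (phi ^ 10) ^ j)
    by (intro j; rewrite <- !pow_mult; f_equal; lia).
  destruct (Rlt_le_dec N 243) as [Hsmall|Hlarge].
  - exists 0%nat. rewrite Hpow, pow_O. split; [left; reflexivity | lra].
  - destruct (exists_pow_bracket (phi ^ 10) (N / 243) Hphi10 ltac:(unfold Rdiv; lra))
      as [j [Hlo Hhi]].
    exists j. rewrite Hpow. rewrite <- tech_pow_Rmult in Hhi. split; [right|]; lra.
Qed.

Lemma inbox_witness_zone : inbox 1 (witness1 zone zone) /\ inbox 1 (witness2 zone zone).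
Proof.
  change (inbox 1 (mkZiTau 0 0 1 (-1)) /\ inbox 1 (mkZiTau 0 0 0 (-1))).
  unfold inbox, boxN; cbn [za zb zc zd]. rewrite <- !abs_IZR. cbn [Z.abs]. lra.
Qed.

Lemma elemE_ev a b c d : elemE a b c d = ev phi (mkZiTau a b c d).
Proof.
  unfold elemE, tau, ev, Cplus, Cmult, RtoC, Ci; cbn [fst snd za zb zc zd].
  fold phi. f_equal; ring.
Qed.

Lemma sigmaE_ev a b c d : sigmaE a b c d = ev psi (mkZiTau a b c d).
Proof.
  unfold sigmaE, tau_conj, ev, Cplus, Cmult, RtoC, Ci; cbn [fst snd za zb zc zd].
  fold psi. f_equal; ring.
Qed.

Lemma det_values_iff N1 N2 r : det_values N1 N2 r <->
  exists x1 x2, inbox N1 x1 /\ inbox N2 x2 /\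
    ev phi x1 <> RtoC 0 /\ ev phi x2 <> RtoC 0 /\ r = Cmod (ev phi (zdet x1 x2)).
Proof.
  unfold det_values. split.
  - intros (a1 & b1 & c1 & d1 & a2 & b2 & c2 & d2 & B1 & B2 & H1 & H2 & ->).
    exists (mkZiTau a1 b1 c1 d1), (mkZiTau a2 b2 c2 d2).
    rewrite !elemE_ev, !sigmaE_ev in *. rewrite (ev_zdet _ phi_golden), <- psi_eq.
    tauto.
  - intros ([a1 b1 c1 d1] & [a2 b2 c2 d2] & B1 & B2 & H1 & H2 & ->).
    exists a1, b1, c1, d1, a2, b2, c2, d2.
    rewrite !elemE_ev, !sigmaE_ev, (ev_zdet _ phi_golden), <- psi_eq.
    tauto.
Qed.

Definition K_upper : R := 486 * phi ^ 10.

Lemma K_upper_pos : 0 < K_upper.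
Proof. unfold K_upper. pose proof phi_bounds. pose proof (pow_lt phi 10). lra. Qed.

Lemma det_witness_le_K_upper p q N : 0 < N -> 0 < q -> p * q = 1 ->
  N < 243 * phi ^ 10 * p ^ 5 -> 2 * q ^ 5 <= K_upper / N.
Proof.
  intros HN Hq Hpq Hlarge.
  assert (Hq5 : q ^ 5 * p ^ 5 = 1) by (rewrite <- Rpow_mult_distr, Rmult_comm, Hpq; apply pow1).
  pose proof (pow_lt q 5 Hq).
  apply (Rmult_le_reg_r N); [lra|].
  replace (K_upper / N * N) with K_upper by (field; lra).
  apply Rle_trans with (2 * q ^ 5 * (243 * phi ^ 10 * p ^ 5)); [apply Rmult_le_compat_l; lra|].
  unfold K_upper. right. transitivity (486 * phi ^ 10 * (q ^ 5 * p ^ 5)); [ring|].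
  rewrite Hq5. ring.
Qed.

Lemma upper_witness N : 1 <= N ->
  exists r, det_values (Rpower N (3/5)) (Rpower N (2/5)) r /\ r <= K_upper / N.
Proof.
  intro HN. destruct (exists_witness_scale N HN) as [j [Hscale Hlarge]].
  destruct (ev_tau_even_pows j) as (Hs & Cs & Hs' & Cs').
  set (p := phi ^ (2 * j)) in *. set (q := (phi - 1) ^ (2 * j)) in *.
  set (s := zpow ztau (2 * j)) in *. set (s' := zpow ztau_inv (2 * j)) in *.
  assert (Hpq : p * q = 1)
    by (unfold p, q; rewrite <- Rpow_mult_distr, phi_mul_pred; apply pow1).
  assert (Hp : 1 <= p) by (apply pow_R1_Rle; pose proof phi_bounds; lra).
  destruct (ev_witness_neq0 p q s s' Hs Hs' Hp Hpq) as [H1 H2].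
  exists (Cmod (ev phi (zdet (witness1 s s') (witness2 s s')))). split.
  - apply det_values_iff. exists (witness1 s s'), (witness2 s s').
    enough (inbox (Rpower N (3/5)) (witness1 s s') /\ inbox (Rpower N (2/5)) (witness2 s s'))
      by tauto.
    destruct Hscale as [-> | Hscale].
    + destruct inbox_witness_zone as [B1 B2].
      split; (eapply inbox_le; [apply one_le_Rpower; lra | assumption]).
    + exact (inbox_witness_Rpower p q s s' Hs Hs' Cs Cs' Hp Hpq N Hscale).
  - assert (Hq : 0 < q) by nra.
    pose proof (pow_lt q 5 Hq).
    rewrite (ev_zdet_witness p q), Cmod_R, Rabs_pos_eq by assumption || lra.
    apply (det_witness_le_K_upper p); lra || assumption.
Qed.

Lemma Glb_Rbar_bounds (E : R -> Prop) (m r : R) :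
  (forall x, E x -> m <= x) -> E r -> m <= real (Glb_Rbar E) <= r.
Proof.
  intros Hm Hr. destruct (Glb_Rbar_correct E) as [Hlb Hglb].
  assert (Hlo : Rbar_le m (Glb_Rbar E)) by (apply Hglb; intros x Hx; apply Hm, Hx).
  pose proof (Hlb r Hr) as Hhi.
  destruct (Glb_Rbar E); cbn in *; [lra | contradiction | contradiction].
Qed.

Lemma det_values_mono N1 N2 M1 M2 r : N1 <= M1 -> N2 <= M2 ->
  det_values N1 N2 r -> det_values M1 M2 r.
Proof.
  rewrite !det_values_iff. intros L1 L2 (x1 & x2 & B1 & B2 & H).
  exists x1, x2. split; [|split]; [eapply inbox_le; eassumption.. | exact H].
Qed.

Lemma det_values_ge N r : 1 <= N -> det_values N N r -> 1 / (72 * N ^ 2) <= r.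
Proof.
  intros HN. rewrite det_values_iff. intros (x1 & x2 & B1 & B2 & H1 & H2 & ->).
  apply Cmod_ev_zdet_ge; assumption || lra.
Qed.

Lemma det_values_zone N : 1 <= N -> det_values N N (Cmod (ev phi (zdet zone zone))).
Proof.
  intro HN. apply det_values_iff. exists zone, zone.
  assert (B : inbox N zone)
    by (unfold inbox, boxN, zone; cbn [za zb zc zd]; rewrite <- !abs_IZR; cbn [Z.abs]; lra).
  assert (H : ev phi zone <> RtoC 0)
    by (rewrite ev_one; intro E; injection E; lra).
  tauto.
Qed.

Lemma Dmin_le N1 N2 r : det_values N1 N2 r -> Dmin N1 N2 <= r.
Proof.
  intro Hr. apply (Glb_Rbar_bounds _ 0); [|exact Hr].
  intros x Hx. apply det_values_iff in Hx as (x1 & x2 & _ & _ & _ & _ & ->). apply Cmod_ge_0.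
Qed.

Lemma Dmin_diag_ge N : 1 <= N -> 1 / (72 * N ^ 2) <= Dmin N N.
Proof.
  intro HN. apply (Glb_Rbar_bounds _ _ _ (fun r => det_values_ge N r HN) (det_values_zone N HN)).
Qed.

Lemma Dmin_le_K_upper N : 1 <= N -> Dmin (Rpower N (3/5)) (Rpower N (2/5)) <= K_upper / N.
Proof.
  intro HN. destruct (upper_witness N HN) as (r & Hr & Hle).
  exact (Rle_trans _ _ _ (Dmin_le _ _ _ Hr) Hle).
Qed.

Lemma Dmin_diag_le N : 1 <= N -> Dmin N N <= K_upper / Rpower N (5/3).
Proof.
  intro HN. set (M := Rpower N (5/3)).
  assert (HM : 1 <= M) by (apply one_le_Rpower; lra).
  destruct (upper_witness M HM) as (r & Hr & Hle).
  assert (E3 : Rpower M (3/5) = N).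
  { unfold M. rewrite Rpower_mult. replace (5/3 * (3/5)) with 1 by field. apply Rpower_1; lra. }
  assert (E2 : Rpower M (2/5) <= N).
  { unfold M. rewrite Rpower_mult. rewrite <- (Rpower_1 N) at 2 by lra. apply Rle_Rpower; lra. }
  rewrite E3 in Hr. apply (det_values_mono _ _ N N) in Hr; [|lra | exact E2].
  exact (Rle_trans _ _ _ (Dmin_le _ _ _ Hr) Hle).
Qed.

Theorem corollary3p2 :
  (exists K : R, 0 < K /\
     forall N : R, 1 <= N -> Dmin (Rpower N (3/5)) (Rpower N (2/5)) <= K / N) /\
  (exists Cl Cu : R, 0 < Cl /\ 0 < Cu /\
     exists N0 : R, forall N : R, N0 <= N ->
       Cl / N ^ 2 <= Dmin N N /\ Dmin N N <= Cu / Rpower N (5/3)).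
Proof.
  split.
  - exists K_upper. exact (conj K_upper_pos Dmin_le_K_upper).
  - exists (1 / 72), K_upper. split; [lra|]. split; [exact K_upper_pos|].
    exists 1. intros N HN. split.
    + replace (1 / 72 / N ^ 2) with (1 / (72 * N ^ 2)) by (field; nra).
      exact (Dmin_diag_ge N HN).
    + exact (Dmin_diag_le N HN).
Qed.
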